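(* Let $q$ be a power of an odd prime, $c\in\mathbb{F}_q^*$, and $f(X)=c(X^{q+1}-X^2)$ on $\mathbb{F}_{q^2}$. The functional graph of $f$ has exactly $\frac{q-1}{2}$ cycles of length two.
   Context: The functional graph of $f$ is the directed graph on $\mathbb{F}_{q^2}$ with edges $x\to f(x)$. *)

From HB Require Import structures.
From mathcomp Require Import all_boot all_order all_algebra all_field.
Set Implicit Arguments. Unset Strict Implicit. Unset Printing Implicit Defensive.
Import GRing.Theory.
Local Open Scope ring_scope.

Definition two_cycles (T : finType) (f : T -> T) : {set {set T}} :=
  [set [set x; f x] | x in [pred x | (f (f x) == x) && (f x != x)]].

Definition fmap (F : finFieldType) (q : nat) (c : F) (x : F) : F :=
  c * (x ^+ q.+1 - x ^+ 2).

(* Write u = x^q - x and s = x^q + x.  Then f(x) = c x u and f(f(x)) = -c^3 x u^2 s,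
   so the points of period exactly two are the solutions of c^3 u^2 s = -1 (f has no
   nonzero fixed point: c u = 1 would give c u = -1 after raising to the q-th power).
   In odd characteristic x |-> (u, s) is a bijection from F_{q^2} onto U x F_q, where
   U = {u | u^q = -u}; solutions thus correspond to u in U \ {0}, with s = -1/(c^3 u^2)
   automatically in F_q.  As |U| = q there are q - 1 of them, two per cycle. *)

From HB Require Import structures.
From mathcomp Require Import all_boot all_order all_algebra all_field.
From mathcomp Require Import ring zify.
Set Implicit Arguments. Unset Strict Implicit. Unset Printing Implicit Defensive.
Import GRing.Theory.
Local Open Scope ring_scope.

Lemma card_two_periodic_points (T : finType) (f : T -> T) :
  #|[set x | (f (f x) == x) && (f x != x)]| = (#|two_cycles f| * 2)%N.
Proof.
set D := [set x | _].
have cycle_of x z : x \in D -> z \in [set x; f x] ->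
    z \in D /\ [set z; f z] = [set x; f x].
  rewrite !inE => /andP[/eqP ffx fx] /orP[] /eqP ->; first by rewrite ffx fx eqxx.
  by rewrite ffx eqxx eq_sym fx setUC.
have cycleP B : B \in two_cycles f -> exists2 x, x \in D & B = [set x; f x].
  by case/imsetP=> x xD ->; exists x; rewrite // inE.
have partD : partition (two_cycles f) D.
  apply/and3P; split.
  - apply/eqP/setP=> z; apply/bigcupP/idP=> [[B /cycleP[x xD ->]]|zD].
      by case/(cycle_of _ _ xD).
    exists [set z; f z]; last by rewrite !inE eqxx.
    by apply/imsetP; exists z => //; move: zD; rewrite inE.
  - apply/trivIsetP=> _ _ /cycleP[x xD ->] /cycleP[y yD ->] neq_xy.
    apply/pred0P=> z /=; apply/negP=> /andP[zx zy].
    have [_ ex] := cycle_of _ _ xD zx; have [_ ey] := cycle_of _ _ yD zy.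
    by rewrite -ex -ey eqxx in neq_xy.
  - by apply/negP=> /cycleP[x _] /setP/(_ x); rewrite !inE eqxx.
rewrite (card_partition partD) -sum_nat_const; apply: eq_bigr => B /cycleP[x].
by rewrite inE => /andP[_ fx] ->; rewrite cards2 eq_sym fx.
Qed.

Lemma card_expr_eq_scale_le (R : finIdomainType) (n : nat) (a : R) :
  (1 < n)%N -> (#|[set x : R | (x ^+ n == a * x)%R]| <= n)%N.
Proof.
move=> n_gt1; set P : {poly R} := 'X^n - a *: 'X.
have sizeP : size P = n.+1.
  rewrite size_polyDl size_polyXn // size_polyN.
  by apply: leq_ltn_trans (size_scale_leq _ _) _; rewrite size_polyX.
rewrite -ltnS -sizeP cardE max_poly_roots ?enum_uniq //.
  by rewrite -size_poly_eq0 sizeP.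
apply/allP=> x; rewrite mem_enum inE => /eqP xn.
by rewrite rootE !hornerE xn subrr.
Qed.

Section ConjugationOverFq.

Variables (F : finFieldType) (q : nat).
Hypotheses (charFq : [pchar F].-nat q) (cardF : #|F| = (q ^ 2)%N).

Lemma q_gt1 : (1 < q)%N.
Proof.
rewrite -(ltn_sqr 1) -cardF; apply/card_gt1P.
by exists 0, 1; rewrite !inE eq_sym oner_neq0.
Qed.

Lemma expr0q : (0 : F) ^+ q = 0.
Proof. by rewrite expr0n gtn_eqF // ltnW // q_gt1. Qed.

Lemma exprqD (x y : F) : (x + y) ^+ q = x ^+ q + y ^+ q.
Proof. exact: exprDn_pchar. Qed.

Lemma exprqN (x : F) : (- x) ^+ q = - x ^+ q.
Proof. exact: exprNn_pchar. Qed.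

Lemma exprqB (x y : F) : (x - y) ^+ q = x ^+ q - y ^+ q.
Proof. by rewrite exprqD exprqN. Qed.

Lemma exprqK (x : F) : (x ^+ q) ^+ q = x.
Proof. by rewrite -exprM mulnn -cardF expf_card. Qed.

Definition fixedq : {set F} := [set x | x ^+ q == x].
Definition trace0q : {set F} := [set x | x ^+ q == - x].

Lemma card_fixedq_le : (#|fixedq| <= q)%N.
Proof.
rewrite (eq_card (B := [set x : F | x ^+ q == 1 * x])); last first.
  by move=> x; rewrite !inE mul1r.
exact: card_expr_eq_scale_le q_gt1.
Qed.

Lemma card_trace0q_le : (#|trace0q| <= q)%N.
Proof.
rewrite (eq_card (B := [set x : F | x ^+ q == -1 * x])); last first.
  by move=> x; rewrite !inE mulN1r.
exact: card_expr_eq_scale_le q_gt1.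
Qed.

Lemma expq_add_fixedq (x : F) : x ^+ q + x \in fixedq.
Proof. by rewrite inE exprqD exprqK addrC. Qed.

Lemma expq_sub_trace0q (x : F) : x ^+ q - x \in trace0q.
Proof. by rewrite inE exprqB exprqK opprB. Qed.

Hypothesis two_neq0 : (2%:R : F) != 0.

Lemma trace0q_fixedq_decomp {s u : F} : s \in fixedq -> u \in trace0q ->
  let x := (s - u) / 2%:R in x ^+ q - x = u /\ x ^+ q + x = s.
Proof.
rewrite !inE => /eqP sq /eqP uq x.
have xq : x ^+ q = (s + u) / 2%:R.
  by rewrite exprMn exprVn exprqB sq uq opprK mulr2n exprqD expr1n.
by rewrite xq /x; split; field.
Qed.

Lemma card_trace0q : #|trace0q| = q.
Proof.
pose uv (x : F) := (x ^+ q - x, x ^+ q + x).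
have uv_inj : injective uv.
  move=> x y [ux sx]; suff half (z : F) : z = ((z ^+ q + z) - (z ^+ q - z)) / 2%:R.
    by rewrite [x]half [y]half ux sx.
  by field.
have : (q * q <= #|trace0q| * #|fixedq|)%N.
  rewrite mulnn -cardF -cardsX -cardsT -(card_imset _ uv_inj).
  apply/subset_leq_card/subsetP=> _ /imsetP[x _ ->].
  by rewrite in_setX expq_sub_trace0q expq_add_fixedq.
have := card_trace0q_le; have := card_fixedq_le; have := q_gt1; nia.
Qed.

Variable c : F.
Hypotheses (cq : c ^+ q = c) (c_neq0 : c != 0).
Local Notation f := (fmap q c).

Lemma fmapE (x : F) : f x = c * x * (x ^+ q - x).
Proof. by rewrite /fmap exprS; ring. Qed.

Lemma fmap_fmapE (x : F) : f (f x) = - c ^+ 3 * x * (x ^+ q - x) ^+ 2 * (x ^+ q + x).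
Proof. by rewrite [f (f x)]fmapE fmapE !exprMn cq exprqB exprqK; ring. Qed.

Lemma fmap_eq_id (x : F) : (f x == x) = (x == 0).
Proof.
have [->|x_neq0] := eqVneq x 0; first by rewrite fmapE mulr0 mul0r eqxx.
apply/negbTE/eqP; rewrite fmapE -[RHS]mulr1 -mulrA mulrCA => /(mulfI x_neq0) cu1.
have cu1' : c * (x - x ^+ q) = 1.
  by rewrite -[c]cq -[x in x - _]exprqK -exprqB -exprMn cu1 expr1n.
by move/eqP: two_neq0; apply; rewrite mulr2n -{1}cu1 -cu1'; ring.
Qed.

Lemma fmap_two_periodicE (x : F) :
  (f (f x) == x) && (f x != x) = (c ^+ 3 * (x ^+ q - x) ^+ 2 * (x ^+ q + x) == -1).
Proof.
rewrite fmap_eq_id fmap_fmapE; have [->|x_neq0] := eqVneq x 0.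
  by rewrite /= andbF expr0q subr0 addr0 mulr0 eq_sym oppr_eq0 oner_eq0.
set t := c ^+ 3 * _ * _; rewrite andbT.
have -> : - c ^+ 3 * x * (x ^+ q - x) ^+ 2 * (x ^+ q + x) = x * - t by rewrite /t; ring.
by rewrite -[X in _ == X]mulr1 (inj_eq (mulfI x_neq0)) eqr_oppLR.
Qed.

Lemma card_two_periodic_eqn :
  #|[set x : F | c ^+ 3 * (x ^+ q - x) ^+ 2 * (x ^+ q + x) == -1]| = (q - 1)%N.
Proof.
pose s (u : F) := - (c ^+ 3 * u ^+ 2)^-1.
pose h (u : F) := (s u - u) / 2%:R.
have s_fixedq u : u \in trace0q -> s u \in fixedq.
  rewrite !inE /s => /eqP uq.
  by rewrite exprqN exprVn exprMn -exprAC cq -exprAC uq sqrrN.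
have cs u : u != 0 -> c ^+ 3 * u ^+ 2 * s u = -1.
  by move=> u_neq0; rewrite /s mulrN mulfV // mulf_neq0 ?expf_neq0.
have h_sub u : u \in trace0q -> (h u) ^+ q - h u = u.
  by move=> uU; case: (trace0q_fixedq_decomp (s_fixedq u uU) uU).
have -> : [set x | c ^+ 3 * (x ^+ q - x) ^+ 2 * (x ^+ q + x) == -1] = h @: (trace0q :\ 0).
  apply/setP=> x; rewrite inE; apply/eqP/imsetP=> [eqn_x|[u /setD1P[u_neq0 uU] ->]].
    have u_neq0 : x ^+ q - x != 0.
      apply: contra_eq_neq eqn_x => ->.
      by rewrite expr0n !(mulr0, mul0r) eq_sym oppr_eq0 oner_eq0.
    set u := x ^+ q - x in u_neq0 *.
    exists u; first by rewrite in_setD1 u_neq0 expq_sub_trace0q.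
    have su : s u = x ^+ q + x.
      apply: (mulfI (mulf_neq0 (expf_neq0 3 c_neq0) (expf_neq0 2 u_neq0))).
      by rewrite cs // -eqn_x.
    by rewrite /h su /u; field.
  by case: (trace0q_fixedq_decomp (s_fixedq u uU) uU) => -> ->; apply: cs.
rewrite card_in_imset; last first.
  move=> u v /setD1P[_ uU] /setD1P[_ vU] huv.
  by rewrite -(h_sub u uU) -(h_sub v vU) huv.
have := cardsD1 0 trace0q.
by rewrite card_trace0q inE expr0q oppr0 eqxx => ->; rewrite addKn.
Qed.

Lemma card_fmap_two_periodic :
  #|[set x | (f (f x) == x) && (f x != x)]| = (q - 1)%N.
Proof.
by rewrite -card_two_periodic_eqn; apply: eq_card => x; rewrite !inE fmap_two_periodicE.
Qed.

End ConjugationOverFq.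

Theorem corollary10 (F : finFieldType) (p k : nat) (c : F) :
  prime p -> odd p -> (0 < k)%N ->
  #|F| = ((p ^ k) ^ 2)%N ->
  c ^+ (p ^ k) = c -> c != 0 ->
  #|two_cycles (fmap (p ^ k) c)| = ((p ^ k - 1) %/ 2)%N.
Proof.
move=> p_pr p_odd _ cardF cq c_neq0.
have charFp : p \in [pchar F].
  by apply: (@card_finPcharP _ _ (k * 2)%N) => //; rewrite cardF expnM.
have charFq : [pchar F].-nat (p ^ k)%N.
  by rewrite pnatX (eq_pnat _ (pcharf_eq charFp)) pnat_id.
have two_neq0 : (2%:R : F) != 0.
  by rewrite -(dvdn_pcharf charFp) dvdn_prime2 //; apply: contraTneq p_odd => ->.
have := card_fmap_two_periodic charFq cardF two_neq0 cq c_neq0.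
by rewrite card_two_periodic_points => <-; rewrite mulnK.
Qed.
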